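(* Let $G=(V,E)$ be a finite simple graph with $|V(G)|=n$ and let $k$ be a positive integer. Then $\gamma_{gr}^{Z,k}(G)\geq n-F_k(G)$.
   Context: For a vertex $v$, $N(v)$ is its open neighborhood and $N[v]=N(v)\cup\{v\}$. A sequence $S=(v_1,\ldots,v_m)$ of distinct vertices is a $k$-$Z$-sequence if for each $i\in[m]$ there is a vertex $u_i\in N(v_i)$ such that the number of indices $j<i$ with $u_i\in N[v_j]$ is less than $k$; $\gamma_{gr}^{Z,k}(G)$ is the maximum length of a $k$-$Z$-sequence. $k$-forcing: initially a set $B$ of vertices is colored blue and the rest white; at each step, if a blue vertex has at most $k$ white neighbors (and at least one), all its white neighbors are colored blue. $B$ is a $k$-forcing set if repeated application eventually colors all vertices blue. $F_k(G)$ is the minimum size of a $k$-forcing set of $G$. *)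

(* A finite simple graph: vertex type T : finType,
   adjacency e : rel T, assumed symmetric and irreflexive in the theorem. *)
From mathcomp Require Import all_boot.
Set Implicit Arguments.
Unset Strict Implicit.
Unset Printing Implicit Defensive.

Section Graph.
Variables (T : finType) (e : rel T).

Definition onbhd (v : T) : {set T} := [set u | e v u].
Definition cnbhd (v : T) : {set T} := v |: onbhd v.

Definition kZseq (k : nat) (s : seq T) : bool :=
  uniq s &&
  [forall i : 'I_(size s),
     [exists u, (u \in onbhd (tnth (in_tuple s) i)) &&
        (count (fun w => u \in cnbhd w) (take i s) < k)]].

(* gamma_gr^{Z,k}(G): maximum length of a k-Z-sequence (lengths are
   bounded by #|T| since the vertices are distinct). *)
Definition gammaZk (k : nat) : nat :=
  \max_(m < #|T|.+1 | [exists s : m.-tuple T, kZseq k s]) m.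

Definition kforce_step (k : nat) (B : {set T}) : {set T} :=
  B :|: \bigcup_(v in B | #|onbhd v :\: B| <= k) onbhd v.

Definition kforcing (k : nat) (B : {set T}) : bool :=
  iter #|T| (kforce_step k) B == setT.

Lemma kforcing_exists (k : nat) :
  exists n, [exists B : {set T}, kforcing k B && (#|B| == n)].
Proof.
exists #|T|; apply/existsP; exists setT; rewrite cardsT eqxx andbT.
rewrite /kforcing; elim: #|T| => //= n /eqP ->.
by apply/eqP/setP=> x; rewrite !inE.
Qed.

Definition Fk (k : nat) : nat := ex_minn (kforcing_exists k).

End Graph.

From mathcomp Require Import all_boot.

(* Take a minimum k-forcing set B and list the vertices outside B by decreasing
   forcing round.  A vertex v coloured in the round starting from the blue set
   B_r was forced by some x in B_r with at most k white neighbours.  Every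
   vertex listed before v is still white in B_r, so a vertex w listed before v
   with x in N[w] is a white neighbour of x different from v: there are fewer
   than k of them, and x in N(v) witnesses the k-Z-condition for v.  The list
   has n - F_k(G) vertices. *)

Set Implicit Arguments.
Unset Strict Implicit.
Unset Printing Implicit Defensive.

Section KZSequences.
Variables (T : finType) (e : rel T) (k : nat).

Definition kZextendable (r : seq T) (v : T) : bool :=
  [exists u, (u \in onbhd e v) && (count (fun w => u \in cnbhd e w) r < k)].

Lemma kZseq_uniq (s : seq T) : kZseq e k s -> uniq s.
Proof. by case/andP. Qed.

Lemma kZseq_nil : kZseq e k [::].
Proof. by apply/andP; split=> //; apply/forallP => -[]. Qed.

Lemma kZseqE (x0 : T) (s : seq T) :
  kZseq e k s =
  uniq s &&
  all (fun i => kZextendable (take i s) (nth x0 s i)) (iota 0 (size s)).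
Proof.
congr andb; apply/forallP/allP => [ext i | ext i].
  rewrite mem_iota add0n => lt_i_s.
  by have := ext (Ordinal lt_i_s); rewrite (tnth_nth x0).
by rewrite (tnth_nth x0); apply: ext; rewrite mem_iota add0n ltn_ord.
Qed.

Lemma kZseq_rcons (s : seq T) (v : T) :
  kZseq e k (rcons s v) = [&& kZseq e k s, v \notin s & kZextendable s v].
Proof.
rewrite !(kZseqE v) rcons_uniq size_rcons -addn1 iotaD all_cat /= andbT.
rewrite -cats1 take_size_cat // nth_cat ltnn subnn /=.
have -> : all (fun i => kZextendable (take i (s ++ [:: v]))
                                    (nth v (s ++ [:: v]) i)) (iota 0 (size s)) =
          all (fun i => kZextendable (take i s) (nth v s i)) (iota 0 (size s)).
  apply: eq_in_all => i; rewrite mem_iota add0n => /andP [_ lt_i_s].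
  by rewrite takel_cat ?nth_cat ?lt_i_s // ltnW.
by case: (v \in s); case: (uniq s); rewrite /= ?andbF.
Qed.

Lemma kZseq_size_le_gammaZk (s : seq T) : kZseq e k s -> size s <= gammaZk e k.
Proof.
move=> Zs; have lt_s_T : size s < #|T|.+1.
  by rewrite ltnS -(card_uniqP (kZseq_uniq Zs)) max_card.
apply: (@leq_bigmax_cond _ _ _ (Ordinal lt_s_T)).
by apply/existsP; exists (in_tuple s).
Qed.

Hypothesis e_sym : symmetric e.

Lemma kZextendable_forced (B : {set T}) (x v : T) (r : seq T) :
  x \in B -> #|onbhd e x :\: B| <= k -> v \in onbhd e x :\: B ->
  uniq r -> v \notin r -> {subset r <= ~: B} -> kZextendable r v.
Proof.
move=> xB few_white v_white uniq_r v_r r_white.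
have [vB exv] : v \notin B /\ e x v.
  by move: v_white; rewrite /onbhd !inE => /andP.
apply/existsP; exists x; rewrite /onbhd inE e_sym exv -size_filter /=.
apply: leq_trans few_white; rewrite (cardsD1 v) v_white add1n ltnS cardE.
apply: uniq_leq_size; first by rewrite filter_uniq.
move=> w; rewrite mem_filter mem_enum => /andP [x_Nw w_r].
have wB : w \notin B by rewrite -in_setC r_white.
have w_ne_v : w != v by apply: contraNneq v_r => <-.
rewrite !inE w_ne_v wB /=; move: x_Nw; rewrite !inE e_sym.
by case/orP => // /eqP x_eq_w; rewrite -x_eq_w xB in wB.
Qed.

Lemma kZseq_cat_forced (B : {set T}) (s t : seq T) :
  kZseq e k s -> {subset s <= ~: B} -> uniq (s ++ t) ->
  {subset t <= kforce_step e k B :\: B} -> kZseq e k (s ++ t).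
Proof.
move=> Zs s_white; elim/last_ind: t => [|t v IH]; first by rewrite cats0.
rewrite -rcons_cat rcons_uniq => /andP [v_st uniq_st] tv_forced.
have t_forced : {subset t <= kforce_step e k B :\: B}.
  by move=> w wt; apply: tv_forced; rewrite mem_rcons inE wt orbT.
have /setDP [] : v \in kforce_step e k B :\: B.
  by apply: tv_forced; rewrite mem_rcons mem_head.
rewrite /kforce_step inE => /orP [-> // | /bigcupP [x]].
move=> /andP [xB few_white] xv vB.
rewrite kZseq_rcons v_st IH //.
apply: (kZextendable_forced xB few_white) => //; first by rewrite in_setD vB xv.
move=> w; rewrite mem_cat => /orP [/s_white // | /t_forced /setDP [_]].
by rewrite in_setC.
Qed.

Lemma kZseq_forced_from (n : nat) (B : {set T}) :
  exists2 s, kZseq e k s & s =i iter n (kforce_step e k) B :\: B.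
Proof.
elim: n B => [|n IH] B.
  by exists [::]; rewrite ?kZseq_nil // setDv => w; rewrite inE.
set B' := kforce_step e k B; have [s Zs s_later] := IH B'.
have sub_B_B' : B \subset B' := subsetUl _ _.
have sub_B'_iter : B' \subset iter n (kforce_step e k) B'.
  by elim: n {IH s Zs s_later} => //= n /subset_trans; apply; apply: subsetUl.
have s_white : {subset s <= ~: B'}.
  by move=> w; rewrite s_later in_setD in_setC => /andP [].
exists (s ++ enum (B' :\: B)).
  apply: (kZseq_cat_forced (B := B) Zs); last by move=> w; rewrite mem_enum.
  - by move=> w /s_white; apply/subsetP; rewrite setCS.
  - rewrite cat_uniq kZseq_uniq // enum_uniq andbT; apply/hasPn => w.
    by rewrite mem_enum in_setD => /andP [_ wB']; rewrite s_later in_setD wB'.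
move=> w; rewrite mem_cat s_later mem_enum iterSr -/B' !in_setD.
have [wB' | wB'] := boolP (w \in B').
  by rewrite (subsetP sub_B'_iter) ?andbT.
by rewrite andbF orbF (contraNN (subsetP sub_B_B' w) wB').
Qed.

End KZSequences.

Theorem mainTheorem4 (T : finType) (e : rel T) (k : nat) :
  symmetric e -> irreflexive e -> 0 < k ->
  #|T| - Fk e k <= gammaZk e k.
Proof.
move=> e_sym _ _; rewrite /Fk; case: ex_minnP => m /existsP [B].
case/andP => /eqP forcing /eqP <- _.
have [s Zs s_compl] := kZseq_forced_from k e_sym #|T| B.
rewrite forcing setTD in s_compl.
apply: leq_trans (kZseq_size_le_gammaZk Zs).
by rewrite -(card_uniqP (kZseq_uniq Zs)) (eq_card s_compl) -(cardsC B) addKn.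
Qed.
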